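(* For every $s\in S$ and $u\in W$ one has in $Z$ \[ c(u^{-1}s)=\sum_{w\in W}{}^uY_{I_w}(s)\,\zeta(u)^\vee_{I_w},\qquad\text{where } {}^uY_{I_w}=uY_{I_w}u^{-1}. \]
   Context: Setting: $\Phi$ a finite real root system (simple roots $\Pi$, positive roots $\Phi_+$, negative roots $\Phi_-$, Coxeter group $W$), $\mathcal O$ its coefficient ring, $\Lambda$ a free $\mathcal O$-module with root lattice $\subset\Lambda\subset$ weight lattice; $F$ a one-dimensional commutative formal group law over a commutative ring $R$; $S$ the formal group ring ($R[[x_\lambda]]_{\lambda\in\Lambda}$ modulo the closure of $x_0=0$, $x_{\lambda+\mu}=F(x_\lambda,x_\mu)$; no completion if $F$ polynomial; in the non-crystallographic case $F$ additive, $R=\mathcal O$, $S=\mathrm{Sym}_{\mathcal O}\Lambda$), with $W$ acting by $w(x_\lambda)=x_{w(\lambda)}$. Assume all $x_\alpha$ regular and that for distinct positive roots $\alpha,\alpha'$, $x_\alpha\mid x_{\alpha'}f\Rightarrow x_\alpha\mid f$. $Q=S[1/x_\alpha]$, $Q_W$ the twisted group algebra (basis $\delta_w$, $\delta_wq=w(q)\delta_w$), acting on $Q$ by $q\delta_w(f)=q\,w(f)$. $Y_\alpha=\frac1{x_{-\alpha}}+\frac1{x_\alpha}\delta_{s_\alpha}$ (so $Y_\alpha(f)=\frac f{x_{-\alpha}}+\frac{s_\alpha(f)}{x_\alpha}$), $Y_i=Y_{\alpha_i}$. Fixed reduced words $I_w$, $Y_{I_w}=Y_{i_1}\cdots Y_{i_l}$,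 $I_w^{-1}$ reversed word. ${}^uY_{I_w}(s)$ means $u\big(Y_{I_w}(u^{-1}(s))\big)$. $\mathbb D$ = $R$-subalgebra of $Q_W$ generated by $S$ and the $Y_i$ (free left $S$-module on $\{Y_{I_w}\}$). $Z=\{(z_v)_{v\in W}\in\bigoplus_vS: z_{s_\alpha w}-z_w\in x_\alpha S\}$, identified with $\mathrm{Hom}_S(\mathbb D,S)$ via $\phi\mapsto(\phi(\delta_v))_v$. Hecke action $q\delta_w\bullet(z_v)_v=(v(q)z_{vw})_v$; Weyl action $q\delta_w\odot(z_v)_v=(q\,w(z_{w^{-1}v}))_v$. Characteristic map $c\colon S\to Z$, $c(f)=(v(f))_v$. $x_\Pi=\prod_{\alpha\in\Phi_-}x_\alpha$, $[e]$ with $e$-coordinate $x_\Pi$ and others $0$, $[v]=\delta_v\odot[e]$, $\zeta(v)_{I_w}=Y_{I_w^{-1}}\bullet[v]$, $\zeta_{I_w}=\zeta(e)_{I_w}$. $\zeta^\vee_{I_w}\in Z$ corresponds to the functional on $\mathbb D$ with $Y_{I_u}\mapsto\delta^{Kr}_{w,u}$, and $\zeta(u)^\vee_{I_w}:=\delta_u\odot\zeta^\vee_{I_w}$ (these form an $S$-basis of $Z$ dual to $\{\zeta(u)_{I_w}\}$ under $(z,z')\mapsto\pi\bullet(zz')$, where $\pi=\sum_w\frac1{w(x_\Pi)}\delta_w$). *)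

From HB Require Import structures.
From mathcomp Require Import all_boot all_order all_algebra all_fingroup.
Set Implicit Arguments. Unset Strict Implicit. Unset Printing Implicit Defensive.
Import GRing.Theory.
Local Open Scope ring_scope.
Local Open Scope group_scope.

(* Abstract rendering of the standing setting:
   - W        : the (finite) Coxeter group, with simple reflections s_i = refl (simple i)
   - Phi      : the finite set of roots, with the W-action wact, negation negr,
                positivity predicate pos, reflections refl : Phi -> W
   - S        : the formal group ring, with W acting by ring automorphisms sact,
                and the elements x_alpha = x alpha
   - Q        : S[1/x_alpha], given by an injective ring map emb : S -> Q in which
                all x_alpha become units and every element is s / (prod x_alpha)^k;
                qact is the induced W-action on Q
   - word w   : the fixed reduced word I_w. *)
Record setting := Setting {
  W : finGroupType;
  Phi : finType;
  rk : nat;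
  S : comNzRingType;
  Q : comUnitRingType;
  wact : W -> Phi -> Phi;
  negr : Phi -> Phi;
  pos : pred Phi;
  refl : Phi -> W;
  simple : 'I_rk -> Phi;
  word : W -> seq 'I_rk;
  sact : W -> S -> S;
  qact : W -> Q -> Q;
  emb : S -> Q;
  x : Phi -> S;
  wact1 : forall a, wact 1 a = a;
  wactM : forall v w a, wact (v * w) a = wact v (wact w a);
  negrK : forall a, negr (negr a) = a;
  wact_negr : forall w a, wact w (negr a) = negr (wact w a);
  pos_negr : forall a, pos (negr a) = ~~ pos a;
  refl_negr : forall a, refl (negr a) = refl a;
  refl_neq1 : forall a, refl a != 1;
  refl_invol : forall a, refl a * refl a = 1;
  refl_root : forall a, wact (refl a) a = negr a;
  refl_conj : forall w a, refl (wact w a) = w * refl a * w^-1;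
  simple_pos : forall i, pos (simple i);
  simple_inj : injective simple;
  W_gen : [set: W] = <<[set refl (simple i) | i : 'I_rk]>>;
  word_prod : forall w, \prod_(i <- word w) refl (simple i) = w;
  word_reduced : forall w (l : seq 'I_rk),
      \prod_(i <- l) refl (simple i) = w -> (size (word w) <= size l)%N;
  sact1 : forall f, sact 1 f = f;
  sactM : forall v w f, sact (v * w) f = sact v (sact w f);
  sactD : forall w f g, sact w (f + g)%R = (sact w f + sact w g)%R;
  sactMr : forall w f g, sact w (f * g)%R = (sact w f * sact w g)%R;
  sact_one : forall w, sact w 1%R = 1%R;
  sact_x : forall w a, sact w (x a) = x (wact w a);
  x_reg : forall a f, (x a * f)%R = 0%R -> f = 0%R;
  x_div : forall a a' f, pos a -> pos a' -> a != a' ->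
      (exists g, (x a' * f)%R = (x a * g)%R) -> exists g, f = (x a * g)%R;
  embD : forall f g, emb (f + g)%R = (emb f + emb g)%R;
  embM : forall f g, emb (f * g)%R = (emb f * emb g)%R;
  emb1 : emb 1%R = 1%R;
  emb_inj : injective emb;
  emb_x_unit : forall a, emb (x a) \is a GRing.unit;
  Q_loc : forall q : Q, exists (f : S) (k : nat),
      (q * (emb (\prod_(a : Phi) x a)) ^+ k)%R = emb f;
  qactD : forall w p q, qact w (p + q)%R = (qact w p + qact w q)%R;
  qactMr : forall w p q, qact w (p * q)%R = (qact w p * qact w q)%R;
  qact_emb : forall w f, qact w (emb f) = emb (sact w f)
}.

Section Ops.
Variable st : setting.
Local Notation W := (W st).
Local Notation Q := (Q st).
Local Notation S := (S st).

(* Elements of the twisted group algebra Q_W, as coefficient functions: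
   a represents sum_w (a w) delta_w. *)
Definition QWelt := W -> Q.

Definition QWdelta (w : W) : QWelt := fun v => ((v == w)%:R)%R.

(* (q delta_v)(q' delta_v') = q v(q') delta_{v v'} *)
Definition QWmul (a b : QWelt) : QWelt :=
  fun w => (\sum_(v : W) a v * @qact st v (b (v^-1 * w)%g))%R.

Definition QWapply (a : QWelt) (f : Q) : Q :=
  (\sum_(v : W) a v * @qact st v f)%R.

Definition Yroot (a : Phi st) : QWelt :=
  fun v => ((v == 1%g)%:R * (@emb st (@x st (@negr st a)))^-1
            + (v == @refl st a)%:R * (@emb st (@x st a))^-1)%R.

Definition YI (w : W) : QWelt :=
  foldr QWmul (QWdelta 1%g) [seq Yroot (@simple st i) | i <- @word st w].

Definition conjYI (u w : W) (s : S) : Q :=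
  @qact st u (QWapply (YI w) (@emb st (@sact st u^-1%g s))).

Definition inZ (z : W -> S) : Prop :=
  forall (a : Phi st) (w : W), exists g : S, (z (@refl st a * w)%g - z w)%R = (@x st a * g)%R.

Definition charmap (f : S) : W -> S := fun v => @sact st v f.

Definition wdelta (u : W) (z : W -> S) : W -> S :=
  fun v => @sact st u (z (u^-1 * v)%g).

(* zv w = zeta^vee_{I_w}: the element of Z corresponding (via
   phi |-> (phi(delta_v))_v) to the S-linear functional on D sending
   Y_{I_u} to delta^Kr_{w,u}.  For z in Z, the associated functional sends
   sum_v q_v delta_v to sum_v q_v z_v. *)
Definition is_zeta_dual (zv : W -> W -> S) : Prop :=
  forall w : W, inZ (zv w) /\
    forall u : W, (\sum_(v : W) YI u v * @emb st (zv w v))%R = ((w == u)%:R)%R.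

End Ops.

From Pilot Require Import Defs.
From mathcomp Require Import all_boot all_order all_algebra all_fingroup.
Import GRing.Theory.
Local Open Scope ring_scope.

(* The defining property of the zeta^vee_{I_w} says that the W x W matrix
   (zeta^vee_{I_w}(delta_v))_{v,w} is a right inverse of the coefficient matrix
   (Y_{I_w}(delta_v))_{w,v}; over a commutative ring it is then also a left
   inverse.  Expanding v(t) = sum_v' [v' = v] v'(t) with that left inverse gives
   c(t) = sum_w Y_{I_w}(t) zeta^vee_{I_w}, and applying u to this identity for
   t = u^{-1}(s) twists the Y_{I_w} and the zeta^vee_{I_w} by u. *)

Lemma sum_mul_eq_delta_sym (T : finType) (R : comPzRingType) (A B : T -> T -> R) :
  (forall i j, \sum_k A i k * B k j = (i == j)%:R) ->
  forall i j, \sum_k B i k * A k j = (i == j)%:R.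
Proof.
move=> AB i j.
pose mx (F : T -> T -> R) : 'M[R]_#|T| :=
  \matrix_(a, b) F (enum_val a) (enum_val b).
have mxAB : mx A *m mx B = 1%:M.
  apply/matrixP => a b; rewrite !mxE.
  under eq_bigr do rewrite !mxE.
  by rewrite -(big_enum_val (fun k => A _ k * B k _)) AB (inj_eq enum_val_inj).
have /matrixP /(_ (enum_rank i) (enum_rank j)) := mulmx1C mxAB.
rewrite !mxE (inj_eq enum_rank_inj) => <-.
rewrite (big_enum_val (fun k => B i k * A k j)).
by apply: eq_bigr => k _; rewrite !mxE !enum_rankK.
Qed.

Section ZetaDualExpansion.
Variable st : setting.

Lemma qact_sum (u : W st) (I : Type) (r : seq I) (F : I -> Q st) :
  Defs.qact u (\sum_(i <- r) F i) = \sum_(i <- r) Defs.qact u (F i).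
Proof.
have qact0 : Defs.qact u 0 = 0.
  by apply: (addrI (Defs.qact u 0)); rewrite -qactD !addr0.
exact: (big_morph _ (@qactD st u) qact0).
Qed.

Variable zv : W st -> W st -> S st.
Hypothesis zvP : is_zeta_dual zv.

Lemma zeta_dual_left_inverse (v' v : W st) :
  \sum_w emb (zv w v') * YI w v = (v' == v)%:R.
Proof.
apply: (@sum_mul_eq_delta_sym _ _ (fun w v => YI w v) (fun v w => emb (zv w v))).
by move=> w u; rewrite (proj2 (zvP u)) eq_sym.
Qed.

Lemma charmap_zeta_dual_expansion (t : S st) (v : W st) :
  emb (charmap t v) = \sum_w QWapply (YI w) (emb t) * emb (zv w v).
Proof.
rewrite /QWapply.
under eq_bigr do rewrite mulr_suml.
rewrite exchange_big /=.
under eq_bigr => v' _.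
  under eq_bigr => w _ do rewrite mulrC mulrA.
  rewrite -mulr_suml zeta_dual_left_inverse.
  over.
rewrite (bigD1 v) //= eqxx mul1r big1 ?addr0 ?qact_emb // => v' /negbTE.
by rewrite eq_sym => ->; rewrite mul0r.
Qed.

End ZetaDualExpansion.

Theorem lemma4p1 (st : setting) (zv : W st -> W st -> S st) :
  is_zeta_dual zv ->
  forall (s : S st) (u : W st) (v : W st),
    @emb st (@charmap st (@sact st (u^-1)%g s) v)
    = \sum_(w : W st) conjYI u w s * @emb st (wdelta u (zv w) v).
Proof.
move=> zvP s u v.
have -> : charmap (sact u^-1 s) v = sact u (charmap (sact u^-1 s) (u^-1 * v)%g).
  by rewrite /charmap -[in RHS]sactM mulKVg.
rewrite -qact_emb (@charmap_zeta_dual_expansion _ _ zvP) qact_sum.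
by apply: eq_bigr => w _; rewrite qactMr qact_emb.
Qed.
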